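(* Let $n=2k+1$ with $k\ge 1$. Then $\{d_i : i=1,2,\ldots,n\}$ is a strong resolving set of $S_n$.
   Context: For $n\ge 3$, $S_n$ is the graph with vertex set $\{a_i,b_i,c_i,d_i : 1\le i\le n\}$ and edge set $\{a_ia_{i+1}, b_ib_{i+1}, c_ic_{i+1}, d_id_{i+1}, a_{i+1}b_i, a_ib_i, b_ic_i, c_id_i : 1\le i\le n\}$, indices taken modulo $n$. $d$ is the graph distance. A vertex $w$ strongly resolves distinct vertices $u,v$ if $d(v,w)=d(v,u)+d(u,w)$ or $d(u,w)=d(u,v)+d(v,w)$. A set $S$ is a strong resolving set if every two distinct vertices are strongly resolved by some vertex of $S$. *)

From mathcomp Require Import all_boot.
Set Implicit Arguments. Unset Strict Implicit. Unset Printing Implicit Defensive.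

(** Generic graph distance for a relation [e] on a finite type [T]:
    [walkb e k u v] holds iff there is a walk of length exactly [k] from u to v;
    [gdist e u v] is the least such [k] (searched in [0, #|T|)); for a
    connected graph this is the usual graph distance (every distance is < #|T|). *)
Definition walkb (T : finType) (e : rel T) (k : nat) (u v : T) : bool :=
  [exists p : k.-tuple T, path e u p && (last u p == v)].

Definition gdist (T : finType) (e : rel T) (u v : T) : nat :=
  find (fun k => walkb e k u v) (iota 0 #|T|).

Definition strongly_resolves (T : finType) (e : rel T) (w u v : T) : Prop :=
  gdist e v w = gdist e v u + gdist e u w \/ gdist e u w = gdist e u v + gdist e v w.

Definition strong_resolving_set (T : finType) (e : rel T) (S : {set T}) : Prop :=
  forall u v : T, u != v -> exists2 w, w \in S & strongly_resolves e w u v.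

(** The graph S_n. Vertex (x, i) with x : 'I_4 encodes a_i (x=0), b_i (x=1),
    c_i (x=2), d_i (x=3); i : 'I_n is the index (0-based, taken mod n). *)
Definition Sv (n : nat) := ('I_4 * 'I_n)%type.

Definition succ_mod (n : nat) (i j : 'I_n) : bool := (j : nat) == (i.+1 %% n).

Definition Sadj0 (n : nat) (u v : Sv n) : bool :=
  let: (x, i) := u in let: (y, j) := v in
  [|| (x == y) && succ_mod i j
    , [&& (x : nat) == 0, (y : nat) == 1 & succ_mod j i]
    , [&& (x : nat) == 0, (y : nat) == 1 & i == j]
    , [&& (x : nat) == 1, (y : nat) == 2 & i == j]
    | [&& (x : nat) == 2, (y : nat) == 3 & i == j] ].

Definition Sadj (n : nat) : rel (Sv n) := fun u v => Sadj0 u v || Sadj0 v u.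

Definition Dset (n : nat) : {set Sv n} := [set v : Sv n | (v.1 : nat) == 3].

(* Number the vertices a_0, b_0, a_1, b_1, ..., b_(n-1) in the order of the
   2n-cycle formed by the edges a_i b_i and a_(i+1) b_i, and let c_i and d_i
   share the position of b_i.  Every layer cycle joins positions two apart, so
   the distance in S_n is the layer difference plus half (rounded down) the
   cyclic distance of the positions: this function is 1-Lipschitz along edges
   and every vertex has a neighbour one step closer to any other vertex.
   If v lies in a layer no higher than u, the layer parts add up along
   v -> u -> d_t for every t, and it remains to continue the cyclic geodesic
   from the position of v through that of u to an odd position: to the
   antipode (distance n, odd) when v is in layer a, and to distance n - 1
   otherwise, where the positions of u and v are both odd.  Both choices use
   that n is odd. *)

From mathcomp Require Import all_boot zify.
Set Implicit Arguments. Unset Strict Implicit. Unset Printing Implicit Defensive.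

Definition distn (a b : nat) := a - b + (b - a).

Section GraphDistance.

Variables (T : finType) (e : rel T) (D : T -> T -> nat).
Hypothesis D_refl : forall u, D u u = 0.
Hypothesis D_lipschitz : forall u w v, e u w -> D u v <= (D w v).+1.
Hypothesis D_descent : forall u v, u != v -> exists2 w, e u w & D w v < D u v.

Lemma path_dist_le u p : path e u p -> D u (last u p) <= size p.
Proof.
elim: p u => [|w p IHp] u /=; first by rewrite D_refl.
by case/andP=> euw /IHp; have := D_lipschitz (last w p) euw; lia.
Qed.

Lemma walkb_dist_le k u v : walkb e k u v -> D u v <= k.
Proof.
by case/existsP=> p /andP[/path_dist_le + /eqP <-]; rewrite size_tuple.
Qed.

Lemma walkb_dist u v : walkb e (D u v) u v.
Proof.
move Duv: (D u v) => k; elim: k u Duv => [|k IHk] u Duv.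
  have [<-|neq_uv] := eqVneq u v; first by apply/existsP; exists [tuple]; rewrite /= eqxx.
  by have [w _] := D_descent neq_uv; rewrite Duv.
have [eq_uv|neq_uv] := eqVneq u v; first by rewrite eq_uv D_refl in Duv.
have [w euw ltw] := D_descent neq_uv; have := D_lipschitz v euw.
rewrite Duv => lew; have /existsP[p /andP[wp /eqP lastp]] := IHk w ltac:(lia).
by apply/existsP; exists [tuple of w :: p]; rewrite /= euw wp lastp eqxx.
Qed.

Lemma gdist_eq u v : D u v < #|T| -> gdist e u v = D u v.
Proof.
rewrite /gdist => ltD; case: findP => [/hasP[]|i lti walki before_i].
  by exists (D u v); rewrite ?mem_iota ?walkb_dist.
rewrite size_iota in lti; have {walki} := walki 0; rewrite nth_iota // add0n.
move/walkb_dist_le => leDi; apply/eqP; rewrite eqn_leq leDi andbT leqNgt.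
by apply/negP => ltDi; have := before_i 0 _ ltDi; rewrite nth_iota ?add0n ?walkb_dist.
Qed.

End GraphDistance.

Section CyclicDistance.

Variable N : nat.

Definition cycdist (p q : nat) := minn (distn p q) (N - distn p q).

Lemma cycdistC p q : cycdist p q = cycdist q p.
Proof. rewrite /cycdist /distn; lia. Qed.

Lemma cycdist_le_half p q : p < N -> q < N -> (cycdist p q).*2 <= N.
Proof. rewrite /cycdist /distn; lia. Qed.

Lemma cycdist_triangle p q r : p < N -> q < N -> r < N ->
  cycdist p r <= cycdist p q + cycdist q r.
Proof. rewrite /cycdist /distn; lia. Qed.

Lemma cycdist_eq0 p q : p < N -> q < N -> (cycdist p q == 0) = (p == q).
Proof. rewrite /cycdist /distn; lia. Qed.

Lemma odd_cycdist p q : ~~ odd N -> p < N -> q < N -> odd (cycdist p q) = odd (p + q).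
Proof. rewrite /cycdist /distn; lia. Qed.

Lemma eqmodn_lt p x : p < N -> x < N.*2 -> p = x %[mod N] -> p = x \/ p + N = x.
Proof.
move=> ltpN ltxN; rewrite (modn_small ltpN).
have [ltxN'|lexN] := ltnP x N; first by rewrite modn_small //; left.
rewrite -(subnK lexN) modnDr modn_small; lia.
Qed.

Lemma cycdist_shift_le p p' s : p < N -> p' < N -> s <= N ->
  p' = p + s %[mod N] -> cycdist p p' <= s.
Proof.
move=> ltpN ltp'N leSN /eqmodn_lt; rewrite /cycdist /distn; lia.
Qed.

Lemma cycdist_shift p p' s : p < N -> p' < N -> s.*2 <= N ->
  p' = p + s %[mod N] -> cycdist p p' = s.
Proof.
move=> ltpN ltp'N leSN /eqmodn_lt; rewrite /cycdist /distn; lia.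
Qed.

Lemma cycdist_dir p q : p < N -> q < N ->
  q = p + cycdist p q %[mod N] \/ p = q + cycdist p q %[mod N].
Proof.
move=> ltpN ltqN; set f := cycdist p q.
have : (q = p + f \/ q + N = p + f) \/ (p = q + f \/ p + N = q + f).
  by rewrite /f /cycdist /distn; lia.
by case=> [[]|[]] <-; rewrite ?modnDr; [left|left|right|right].
Qed.

Lemma cycdist_step p q s p1 p2 : p < N -> q < N -> p1 < N -> p2 < N ->
  s <= cycdist p q -> p1 = p + s %[mod N] -> p2 + s = p %[mod N] ->
  cycdist p1 q + s = cycdist p q \/ cycdist p2 q + s = cycdist p q.
Proof.
move=> ltpN ltqN ltp1N ltp2N les modp1 modp2; set f := cycdist p q in les *.
have leN : f <= N by have := cycdist_le_half ltpN ltqN; rewrite -/f; lia.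
have leN' := leq_trans (leq_subr s f) leN; have lesN := leq_trans les leN.
case: (cycdist_dir ltpN ltqN) => [fwd|bwd].
  have near1 : cycdist p1 q <= f - s.
    apply: cycdist_shift_le => //.
    by rewrite -modnDml modp1 modnDml -addnA subnKC.
  have := cycdist_triangle ltpN ltp1N ltqN.
  have := cycdist_shift_le ltpN ltp1N lesN modp1; rewrite -/f.
  by clear -les near1; lia.
have near2 : cycdist q p2 <= f - s.
  apply: cycdist_shift_le => //.
  by apply/eqP; rewrite -(eqn_modDr s) -addnA subnK // modp2 bwd.
have := cycdist_triangle ltpN ltp2N ltqN.
rewrite (cycdistC p p2) (cycdistC q p2) in near2 *.
have := cycdist_shift_le ltp2N ltpN lesN (esym modp2); rewrite -/f.
by clear -les near2; lia.
Qed.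

Lemma cycdist_extend p q s : p < N -> q < N -> cycdist p q <= s -> s.*2 <= N ->
  exists2 t, t < N & cycdist p t = s /\ cycdist p q + cycdist q t = s.
Proof.
move=> ltpN ltqN les leN; set f := cycdist p q in les *.
have N_gt0 : 0 < N := leq_ltn_trans (leq0n p) ltpN.
have leN' : (s - f).*2 <= N by lia.
have lesN : s <= N by lia.
case: (cycdist_dir ltpN ltqN) => [fwd|bwd].
  exists ((p + s) %% N); first exact: ltn_pmod.
  have modt : (p + s) %% N = p + s %[mod N] by rewrite modn_mod.
  rewrite (cycdist_shift ltpN _ leN modt) ?ltn_pmod //; split=> //.
  rewrite (@cycdist_shift q _ (s - f)) ?ltn_pmod ?subnKC //.
  by rewrite modn_mod -[RHS]modnDml fwd modnDml -addnA subnKC.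
set t := (p + (N - s)) %% N; have ltt : t < N by exact: ltn_pmod.
have modt : p = t + s %[mod N] by rewrite modnDml -addnA subnK ?modnDr.
exists t => //; rewrite cycdistC (cycdist_shift ltt ltpN leN modt); split=> //.
rewrite (cycdistC q) (@cycdist_shift t _ (s - f)) ?subnKC //.
by apply/eqP; rewrite -(eqn_modDr f) -addnA subnK // -bwd -modt.
Qed.

End CyclicDistance.

Section SnGraph.

Variable n : nat.
Local Notation V := (Sv n).
Local Notation e := (@Sadj n).

Definition pos (u : V) : nat := (u.2 : nat).*2 + (0 < u.1).

Definition Sdist (u v : V) : nat :=
  distn u.1 v.1 + (cycdist n.*2 (pos u) (pos v))./2.

Let evenN : ~~ odd n.*2 := negbT (odd_double n).

Lemma pos_lt u : pos u < n.*2.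
Proof. by case: u => x i; rewrite /pos /=; have := ltn_ord i; lia. Qed.

Lemma odd_pos u : odd (pos u) = (0 < u.1).
Proof. by rewrite /pos oddD odd_double oddb. Qed.

Lemma Sadj_sym : symmetric e.
Proof. by move=> u v; rewrite /Sadj orbC. Qed.

Lemma succ_modE (i j : 'I_n) : succ_mod i j = (j == ordS i).
Proof. by []. Qed.

Lemma pos_ordS (x : 'I_4) i : pos (x, ordS i) = (i.+1).*2 + (0 < x) %[mod n.*2].
Proof. by rewrite /pos /= -!muln2 -[RHS]modnDml -muln_modl. Qed.

Lemma pos_ordS_shift x i : pos (x, ordS i) = pos (x, i) + 2 %[mod n.*2].
Proof. by rewrite pos_ordS /pos; congr (_ %% _); rewrite /=; lia. Qed.

Lemma pos_ord_pred_shift x i : pos (x, ord_pred i) + 2 = pos (x, i) %[mod n.*2].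
Proof. by rewrite -pos_ordS_shift ord_predK. Qed.

Lemma pos_diag (x y : 'I_4) j : x = 0 :> nat -> y = 1 :> nat ->
  pos (x, ordS j) = pos (y, j) + 1 %[mod n.*2].
Proof. by move=> x0 y1; rewrite pos_ordS /pos x0 y1; congr (_ %% _); rewrite /=; lia. Qed.

Lemma Sadj_ordS x i : e (x, i) (x, ordS i).
Proof. by rewrite /Sadj /Sadj0 succ_modE !eqxx. Qed.

Lemma Sadj_ord_pred x i : e (x, i) (x, ord_pred i).
Proof. by rewrite Sadj_sym -{2}(ord_predK i) Sadj_ordS. Qed.

Lemma Sadj_up (x : 'I_4) i : x < 3 -> e (x, i) (inord x.+1, i).
Proof.
move=> lt_x3; rewrite /Sadj /Sadj0 inordK //.
by case: x lt_x3 => [[|[|[]]]] //= *; rewrite eqxx !orbT.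
Qed.

Lemma Sadj_down (x : 'I_4) i : 0 < x -> e (x, i) (inord x.-1, i).
Proof.
move=> x_gt0; rewrite Sadj_sym; have := @Sadj_up (inord x.-1) i.
by rewrite inordK ?prednK // ?inord_val; [apply|]; have := ltn_ord x; lia.
Qed.

Lemma Sadj_diag (x y : 'I_4) j : x = 0 :> nat -> y = 1 :> nat -> e (y, j) (x, ordS j).
Proof. by move=> x0 y1; rewrite /Sadj /Sadj0 succ_modE x0 y1 !eqxx !orbT. Qed.

Lemma Sadj0_pos u w : Sadj0 u w ->
  ((u.1 : nat) = w.1 /\ cycdist n.*2 (pos u) (pos w) <= 2) \/
  (distn u.1 w.1 = 1 /\ cycdist n.*2 (pos u) (pos w) <= 1).
Proof.
have shift_le s (u' w' : V) : s <= n.*2 -> pos w' = pos u' + s %[mod n.*2] ->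
    cycdist n.*2 (pos u') (pos w') <= s.
  exact: cycdist_shift_le (pos_lt u') (pos_lt w').
have n_gt0 : 0 < n := leq_ltn_trans (leq0n _) (ltn_ord u.2).
case: u w => [x i] [y j]; rewrite /Sadj0 !succ_modE.
case/orP=> [/andP[/eqP<- /eqP->]|].
  left; split=> //; apply: shift_le; first lia.
  by rewrite pos_ordS /pos; congr (_ %% _); rewrite /=; lia.
case/orP=> [|/orP[|/orP[]]] /and3P[/eqP x0 /eqP y1 /eqP eij].
- right; split; first by rewrite x0 y1.
  rewrite cycdistC; subst i; apply: shift_le; first lia.
  by rewrite pos_ordS /pos x0 y1; congr (_ %% _); rewrite /=; lia.
all: right; split; first by rewrite x0 y1.
  by apply: shift_le; [lia | rewrite /pos eij x0 y1 addn0].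
all: by rewrite /pos eij x0 y1 /cycdist /distn /=; lia.
Qed.

Lemma Sadj_pos u w : e u w ->
  ((u.1 : nat) = w.1 /\ cycdist n.*2 (pos u) (pos w) <= 2) \/
  (distn u.1 w.1 = 1 /\ cycdist n.*2 (pos u) (pos w) <= 1).
Proof.
case/orP=> /Sadj0_pos //; rewrite (cycdistC _ (pos w)) /distn; lia.
Qed.

Lemma Sdist_lipschitz u w v : e u w -> Sdist u v <= (Sdist w v).+1.
Proof.
move=> /Sadj_pos adj_uw.
have := cycdist_triangle (pos_lt u) (pos_lt w) (pos_lt v).
rewrite /Sdist; case: adj_uw => [[eq_uw le2]|[d_uw le1]].
  by rewrite /distn eq_uw; lia.
have := odd_cycdist evenN (pos_lt u) (pos_lt w).
have := odd_cycdist evenN (pos_lt w) (pos_lt v).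
rewrite !oddD !odd_double !oddb /=; move: d_uw le1; rewrite /distn.
by case: (posnP u.1) => [->|?]; case: (posnP w.1) => [->|?];
  case: (posnP v.1) => [->|?] /=; lia.
Qed.

Lemma Sdist_descent_shift u v s w1 w2 : e u w1 -> e u w2 -> w1.1 = w2.1 ->
  s <= cycdist n.*2 (pos u) (pos v) ->
  pos w1 = pos u + s %[mod n.*2] -> pos w2 + s = pos u %[mod n.*2] ->
  exists2 w, e u w &
    w.1 = w1.1 /\ cycdist n.*2 (pos w) (pos v) + s = cycdist n.*2 (pos u) (pos v).
Proof.
move=> uw1 uw2 eq_w12 les mod1 mod2.
by case: (cycdist_step (pos_lt u) (pos_lt v) (pos_lt w1) (pos_lt w2) les mod1 mod2);
  [exists w1 | exists w2].
Qed.

Lemma Sdist_descent_up (x y : 'I_4) (i j : 'I_n) : x < y ->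
  exists2 w, e (x, i) w & Sdist w (y, j) < Sdist (x, i) (y, j).
Proof.
move=> lt_xy; have odd_c := odd_cycdist evenN (pos_lt (x, i)) (pos_lt (y, j)).
rewrite oddD !odd_pos /= in odd_c; have lty4 := ltn_ord y.
rewrite /Sdist /distn; set c := cycdist _ _ _ in odd_c *.
have [x0|x_gt0] := posnP x; last first.
  have ltx3 : x < 3 by lia.
  exists (inord x.+1, i); first exact: Sadj_up.
  have -> : pos (inord x.+1, i) = pos (x, i) by rewrite /pos /= inordK // x_gt0.
  by rewrite /= inordK // -/c; lia.
have b1 : (inord 1 : 'I_4) = 1 :> nat by rewrite inordK.
have e1 : e (x, i) (inord 1, i) by have := @Sadj_up x i; rewrite x0; apply.
have e2 : e (x, i) (inord 1, ord_pred i).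
  by have := Sadj_diag (ord_pred i) x0 b1; rewrite ord_predK Sadj_sym.
have y_gt0 : 0 < y by lia.
rewrite x0 y_gt0 /= in odd_c.
have les : 1 <= c by rewrite lt0n; apply: contraTneq odd_c => ->.
have mod1 : pos (inord 1, i) = pos (x, i) + 1 %[mod n.*2].
  by rewrite /pos /= b1 x0 /= addn0.
have mod2 : pos (inord 1, ord_pred i) + 1 = pos (x, i) %[mod n.*2].
  by have := pos_diag (ord_pred i) x0 b1; rewrite ord_predK => ->.
have [w uw [w1 close]] := Sdist_descent_shift e1 e2 erefl les mod1 mod2.
by exists w; rewrite // /distn w1 b1 /= x0; clear -close odd_c y_gt0; lia.
Qed.

Lemma Sdist_descent_down (x y : 'I_4) (i j : 'I_n) : y < x ->
  exists2 w, e (x, i) w & Sdist w (y, j) < Sdist (x, i) (y, j).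
Proof.
move=> lt_yx; have odd_c := odd_cycdist evenN (pos_lt (x, i)) (pos_lt (y, j)).
rewrite oddD !odd_pos /= in odd_c; have ltx4 := ltn_ord x.
have x_gt0 : 0 < x by lia.
rewrite /Sdist /distn; set c := cycdist _ _ _ in odd_c *.
have [x1|x_ne1] := eqVneq (x : nat) 1; last first.
  have x_gt1 : 1 < x by lia.
  exists (inord x.-1, i); first exact: Sadj_down.
  have -> : pos (inord x.-1, i) = pos (x, i) by rewrite /pos /= inordK ?x_gt0 //; lia.
  by rewrite /= inordK -/c; lia.
have y0 : y = 0 :> nat by lia.
have a0 : (inord 0 : 'I_4) = 0 :> nat by rewrite inordK.
have e1 : e (x, i) (inord 0, ordS i) by apply: Sadj_diag.
have e2 : e (x, i) (inord 0, i) by have := Sadj_down i x_gt0; rewrite x1.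
rewrite x_gt0 y0 /= in odd_c.
have les : 1 <= c by rewrite lt0n; apply: contraTneq odd_c => ->.
have mod1 : pos (inord 0, ordS i) = pos (x, i) + 1 %[mod n.*2] by apply: pos_diag.
have mod2 : pos (inord 0, i) + 1 = pos (x, i) %[mod n.*2].
  by rewrite /pos /= a0 x_gt0 /= addn0.
have [w uw [w1 close]] := Sdist_descent_shift e1 e2 erefl les mod1 mod2.
by exists w; rewrite // /distn w1 a0 /= x1 y0; clear -close odd_c; lia.
Qed.

Lemma Sdist_descent_layer (x : 'I_4) (i j : 'I_n) : i != j ->
  exists2 w, e (x, i) w & Sdist w (x, j) < Sdist (x, i) (x, j).
Proof.
move=> neq_ij; have odd_c := odd_cycdist evenN (pos_lt (x, i)) (pos_lt (x, j)).
rewrite oddD !odd_pos addbb in odd_c.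
have c_neq0 : cycdist n.*2 (pos (x, i)) (pos (x, j)) != 0.
  by rewrite cycdist_eq0 ?pos_lt // /pos /= eqn_add2r -!muln2 eqn_pmul2r.
rewrite /Sdist /distn; set c := cycdist _ _ _ in odd_c c_neq0 *.
have les : 2 <= c by clear -odd_c c_neq0; lia.
have [w uw [w1 close]] := Sdist_descent_shift (Sadj_ordS x i) (Sadj_ord_pred x i)
  erefl les (pos_ordS_shift x i) (pos_ord_pred_shift x i).
by exists w; rewrite // w1 /=; move: close; rewrite -/c; clear; lia.
Qed.

Lemma Sdist_descent u v : u != v -> exists2 w, e u w & Sdist w v < Sdist u v.
Proof.
case: u v => [x i] [y j] neq_uv.
have [lt_xy|lt_yx|eq_xy] := ltngtP x y.
- exact: Sdist_descent_up.
- exact: Sdist_descent_down.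
have {}eq_xy : x = y by apply: val_inj.
by subst y; apply: Sdist_descent_layer; apply: contra neq_uv => /eqP->.
Qed.

Lemma gdist_Sadj (u v : V) : gdist e u v = Sdist u v.
Proof.
apply: gdist_eq; first by move=> w; rewrite /Sdist /cycdist /distn !subnn min0n.
- exact: Sdist_lipschitz.
- exact: Sdist_descent.
have := cycdist_le_half (pos_lt u) (pos_lt v); have := ltn_ord u.1; have := ltn_ord v.1.
have := ltn_ord u.2; rewrite card_prod !card_ord /Sdist /distn; lia.
Qed.

Lemma half_cycdist_geodesic p q : odd n -> p < n.*2 -> q < n.*2 -> (odd p -> odd q) ->
  exists t, [/\ t < n.*2, odd t &
    (cycdist n.*2 p t)./2 = (cycdist n.*2 p q)./2 + (cycdist n.*2 q t)./2].
Proof.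
move=> odd_n ltp ltq odd_pq; have le_half := cycdist_le_half ltp ltq.
have odd_c := odd_cycdist evenN ltp ltq; rewrite oddD in odd_c.
case: (boolP (odd p)) => [p_odd|p_even].
  have le_c : cycdist n.*2 p q <= n.-1.
    by move: odd_c; rewrite p_odd odd_pq //; lia.
  have le_s : n.-1.*2 <= n.*2 by rewrite leq_double leq_pred.
  have [t ltt [c_pt c_pqt]] := cycdist_extend ltp ltq le_c le_s.
  exists t; have := odd_cycdist evenN ltp ltt; rewrite oddD c_pt p_odd.
  by split=> //; lia.
have le_c : cycdist n.*2 p q <= n by rewrite -leq_double.
have [t ltt [c_pt c_pqt]] := cycdist_extend ltp ltq le_c (leqnn n.*2).
exists t; have := odd_cycdist evenN ltp ltt; rewrite oddD c_pt (negbTE p_even).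
by split=> //; lia.
Qed.

Lemma Sdist_geodesic_Dset (u v : V) : odd n -> v.1 <= u.1 ->
  exists2 w, w \in Dset n & Sdist v w = Sdist v u + Sdist u w.
Proof.
move=> odd_n le_vu.
have odd_vu : odd (pos v) -> odd (pos u) by rewrite !odd_pos => /leq_trans; apply.
have [t [ltt odd_t half_t]] := half_cycdist_geodesic odd_n (pos_lt v) (pos_lt u) odd_vu.
have ltt2 : t./2 < n by lia.
pose w : V := (inord 3, Ordinal ltt2).
have w3 : w.1 = 3 :> nat by rewrite inordK.
have pos_w : pos w = t by rewrite /pos w3 /=; lia.
exists w; first by rewrite inE w3.
rewrite /Sdist pos_w w3 half_t; have := ltn_ord u.1; rewrite /distn; lia.
Qed.

End SnGraph.

Theorem lemma3p10 (k : nat) (hk : 1 <= k) :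
  strong_resolving_set (@Sadj (k.*2.+1)) (Dset (k.*2.+1)).
Proof.
have odd_n : odd k.*2.+1 by rewrite /= odd_double.
move=> u v _; wlog le_vu : u v / v.1 <= u.1 => [sym|].
  have [/sym //|/ltnW/sym[w Dw res]] := leqP v.1 u.1.
  by exists w; [exact: Dw | apply/or_comm].
have [w Dw geo] := Sdist_geodesic_Dset odd_n le_vu.
by exists w => //; left; rewrite !gdist_Sadj.
Qed.
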